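(* Let $n,m\ge1$, $\vec v\in\hat N^n$, $\vec w\in\hat N^m$, and define $\vec v\nearrow\vec w=(v_1,\dots,v_n,\ n\triangleright w_1,\dots,n\triangleright w_m)$ and $\vec v\nwarrow\vec w=(v_1,\dots,v_n,\ w_1+n,\dots,w_m+n)$, where $n\triangleright a=a+n$ if $a\neq1$ and $n\triangleright 1=1$. Then: (i) $\vec v\nearrow\vec w,\ \vec v\nwarrow\vec w\in\hat N^{n+m}$, and for trees $\pi,\tau$ one has $\mathrm{name}(\pi\nearrow\tau)=\mathrm{name}(\pi)\nearrow\mathrm{name}(\tau)$ and $\mathrm{name}(\pi\nwarrow\tau)=\mathrm{name}(\pi)\nwarrow\mathrm{name}(\tau)$; (ii) both operations are associative on $\bigcup_{n\ge1}\hat N^n$ and satisfy $(\vec u\nearrow\vec v)\nwarrow\vec w=\vec u\nearrow(\vec v\nwarrow\vec w)$; hence, extended bilinearly, they make $\bigoplus_{n\ge1}K\hat N^n$ an associative $L$-algebra, and $\mathrm{name}$ (extended linearly) is an isomorphism of associative $L$-algebras from $\bigoplus_{n\ge1}KY_n$ (with the tree operations) onto it; (iii) $M(\vec v\nearrow\vec w)=M(\vec v)M(\vec w)$, and $M(\vec v\nwarrow\vec w)=(-1)^mM(\vec v)$ if $\vec w=(1,2,\dots,m)$, while $M(\vec v\nwarrow\vec w)=0$ otherwise.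
   Context: $K$ is a field of characteristic zero. $Y_n$ is the set of planar rooted binary trees with $n$ internal vertices ($n+1$ leaves) up to isotopy. For trees $\pi,\tau$ with at least one internal vertex, $\pi\nearrow\tau$ (''over'') is the tree $\tau$ with its leftmost leaf identified with the root of $\pi$, and $\pi\nwarrow\tau$ (''under'') is the tree $\pi$ with its rightmost leaf identified with the root of $\tau$. A complete expression in $x_1,\dots,x_{n+1}$ is a full binary parenthesization of $x_1\cdots x_{n+1}$ (every product of two factors, including the outermost, in parentheses); trees correspond bijectively to complete expressions via $|\mapsto x_1$, $\tau_1\vee\tau_2\mapsto(E_1E_2)$ with consecutive relabelling, $\tau_1\vee\tau_2$ being the tree with new root, left subtree $\tau_1$, right subtree $\tau_2$. The name of $\tau\in Y_n$ is the vector $\vec v\in\mathbb N^n$ with $v_i=i$ if at least one left parenthesis stands immediately left of $x_i$ in the complete expression; otherwise the rightmost of the right parentheses immediately following $x_i$ matches a left parenthesis in the run immediately preceding some $x_j$, and $v_i=j$. $\hat N^n$ is the set of names of trees of $Y_n$. An associative $L$-algebra is a vector space with two associative bilinear products $\nearrow,\nwarrow$ satisfying $(x\nearrow y)\nwarrow z=x\nearrow(y\nwarrow z)$. $M(\vec v)=\mu((1,\dots,1),\vec v)$ where $\mu$ is the Möbius function of $\hat N^n$ with the componentwise order ($\vec v\le\vec w$ iff $v_i\le w_i$ for all $i$). *)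

From HB Require Import structures.
From mathcomp Require Import all_boot all_order all_algebra.
From mathcomp Require Import boolp.
Set Implicit Arguments. Unset Strict Implicit. Unset Printing Implicit Defensive.
Import GRing.Theory Num.Theory.

Inductive tree : Type := Leaf | Node of tree & tree.
Definition tree_eq_dec (x y : tree) : {x = y} + {x <> y}.
Proof. decide equality. Defined.
HB.instance Definition _ := hasDecEq.Build tree (compareP tree_eq_dec).

(* number of internal vertices; Y_n = trees t with internal t = n *)
Fixpoint internal (t : tree) : nat :=
  match t with Leaf => 0 | Node l r => (internal l + internal r).+1 end.

Fixpoint tover (pi tau : tree) : tree :=
  match tau with Leaf => pi | Node l r => Node (tover pi l) r end.
Fixpoint tunder (pi tau : tree) : tree :=
  match pi with Leaf => tau | Node l r => Node l (tunder r tau) end.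

Inductive tok : Type := LP | RP | X of nat.
Definition tok_eq_dec (x y : tok) : {x = y} + {x <> y}.
Proof. decide equality; exact: eq_comparable. Defined.
HB.instance Definition _ := hasDecEq.Build tok (compareP tok_eq_dec).

Definition isX (t : tok) : bool := if t is X _ then true else false.
Definition labelX (t : tok) : nat := if t is X j then j else 0.

Fixpoint expr (t : tree) (k : nat) : seq tok :=
  match t with
  | Leaf => [:: X k.+1]
  | Node l r => LP :: expr l k ++ expr r (k + (internal l).+1) ++ [:: RP]
  end.
Definition cexpr (t : tree) : seq tok := expr t 0.

(* tokens at positions a..b (inclusive, 0-based) *)
Definition slice (s : seq tok) (a b : nat) : seq tok := take (b - a).+1 (drop a s).
Definition balanced (s : seq tok) : bool := count_mem LP s == count_mem RP s.
(* position of the left parenthesis matching the right parenthesis at position q *)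
Definition match_lp (s : seq tok) (q : nat) : nat :=
  \max_(p < q | (nth RP s p == LP) && balanced (slice s p q)) p.

Definition name_at (s : seq tok) (i : nat) : nat :=
  let p := index (X i) s in
  if (0 < p) && (nth RP s p.-1 == LP) then i else
  let r := find (fun t => t != RP) (drop p.+1 s) in
  let q := p + r in                 (* rightmost ')' of the run after x_i *)
  let pl := match_lp s q in         (* its matching '(' *)
  let s' := drop pl.+1 s in
  labelX (nth RP s' (find isX s')). (* the x_j that this run of '(' precedes *)

Definition name (t : tree) : seq nat :=
  [seq name_at (cexpr t) i | i <- iota 1 (internal t)].

Definition hatN (n : nat) (v : seq nat) : Prop := exists t, internal t = n /\ name t = v.
Definition hatNpos (v : seq nat) : Prop := exists n, 0 < n /\ hatN n v.

Definition tri (n a : nat) : nat := if a == 1 then 1 else a + n.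
Definition nover (v w : seq nat) : seq nat := v ++ [seq tri (size v) a | a <- w].
Definition nunder (v w : seq nat) : seq nat := v ++ [seq a + size v | a <- w].

Definition leqv (x y : seq nat) : bool := (size x == size y) && all2 leq x y.

(* all z with 1 <= z_i <= y_i: contains every element of \hat N^n below y *)
Fixpoint box (y : seq nat) : seq (seq nat) :=
  match y with
  | [::] => [:: [::]]
  | a :: y' => [seq b :: z | b <- iota 1 a, z <- box y']
  end.

(* mu(x,x) = 1, mu(x,y) = - sum_{x <= z < y, z in \hat N^n} mu(x,z), 0 otherwise;
   the fuel (sumn y).+1 bounds the length of every chain below y *)
Fixpoint mob_aux (f : nat) (x y : seq nat) : int :=
  match f with
  | 0 => 0%R
  | f'.+1 =>
      if x == y then 1%R
      else if leqv x y then
        (- \sum_(z <- box y | leqv x z && (z != y) && `[< hatN (size y) z >])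
             mob_aux f' x z)%R
      else 0%R
  end.
Definition mobius (x y : seq nat) : int := mob_aux (sumn y).+1 x y.
Definition M (v : seq nat) : int := mobius (nseq (size v) 1) v.

(* an element of K B is a finite formal sum sum_k c_k b_k, given as a list of
   pairs (b_k, c_k); two formal sums are the same vector iff coefs agree *)
Definition coef (T : eqType) (K : fieldType) (c : seq (T * K)) (x : T) : K :=
  (\sum_(p <- c | p.1 == x) p.2)%R.
Definition bilin (T : eqType) (K : fieldType) (op : T -> T -> T)
  (a b : seq (T * K)) : seq (T * K) :=
  [seq (op p.1 q.1, (p.2 * q.2)%R) | p <- a, q <- b].
Definition linmap (T U : eqType) (K : fieldType) (f : T -> U) (a : seq (T * K))
  : seq (U * K) := [seq (f p.1, p.2) | p <- a].

From HB Require Import structures.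
From mathcomp Require Import all_boot all_order all_algebra.
Import GRing.Theory Num.Theory.
From mathcomp Require Import zify boolp.
Set Implicit Arguments. Unset Strict Implicit. Unset Printing Implicit Defensive.

(* Reading the complete expression (E_l E_r) of l ∨ r shows that
   name (l ∨ r) = name l, 1, name r shifted by |l| + 1: the middle 1 belongs
   to the last leaf of l, whose run of closing parentheses ends with the one
   matching the '(' that opens E_l (or that stands just before x_1 when l is
   a leaf).  Hence over and under act on names by the concatenations of the
   statement, which gives (i); the identities of (ii) are computations on
   these concatenations, transported to formal sums by bilinearity, and name
   is injective since the last entry 1 of name (l ∨ r) locates the split.
   For (iii), M v = prod_i g_i(v_i) with g_i(1) = 1, g_i(i) = -1 for i > 1 and
   g_i = 0 otherwise, by induction along the recursion defining the Möbius
   function: the vectors with nonzero product are exactly the names (they are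
   built from the one-vertex tree by over and under), so the sum over the
   names below v is the sum over the whole box [1, v], which factors as
   prod_i sum_(b <= v_i) g_i(b) and vanishes as soon as some v_i = i > 1,
   i.e. for every name but (1, ..., 1).  The product formula makes M
   multiplicative for over and computes it for under. *)

(** * Names from complete expressions *)

Lemma mem_X_expr t k x : X x \in expr t k -> k < x <= k + (internal t).+1.
Proof.
elim: t k => [|l IHl r IHr] k /=; first by rewrite inE => /eqP [->]; lia.
rewrite inE mem_cat mem_cat inE /= => /orP[/IHl|/orP[/IHr|//]]; lia.
Qed.

Lemma nth_find_X_expr t k z : nth RP (expr t k ++ z) (find isX (expr t k ++ z)) = X k.+1.
Proof. by elim: t k z => [|l IHl r IHr] k z //=; rewrite -catA IHl. Qed.

Lemma expr_balanced t k : balanced (expr t k).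
Proof.
apply/eqP; elim: t k => [|l IHl r IHr] k //=.
rewrite !count_cat /= IHl IHr.
by set a := count _ (expr l k); set b := count _ (expr r _); simpl; lia.
Qed.

Definition prefix_weak_dyck (e : seq tok) :=
  forall n, count_mem RP (take n e) <= count_mem LP (take n e).

Lemma prefix_weak_dyck_cat e1 e2 : prefix_weak_dyck e1 -> balanced e1 ->
  prefix_weak_dyck e2 -> prefix_weak_dyck (e1 ++ e2).
Proof.
move=> w1 /eqP b1 w2 n; rewrite take_cat; case: ifP => _; first exact: w1.
by rewrite !count_cat b1 leq_add2l.
Qed.

Lemma prefix_weak_dyck_strict e : balanced e ->
  (forall n, 0 < n < size e -> count_mem RP (take n e) < count_mem LP (take n e)) ->
  prefix_weak_dyck e.
Proof.
move=> /eqP B S n; case: (posnP n) => [->|n0]; first by rewrite take0.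
case: (ltnP n (size e)) => hn; first by apply/ltnW/S; rewrite n0.
by rewrite take_oversize // B.
Qed.

Lemma expr_prefix_lt t k n : 0 < n < size (expr t k) ->
  count_mem RP (take n (expr t k)) < count_mem LP (take n (expr t k)).
Proof.
elim: t k n => [|l IHl r IHr] k n /=; first by lia.
case: n => [//|n] /andP[_ hn] /=.
rewrite catA takel_cat; last by move: hn; rewrite !size_cat /=; lia.
rewrite add0n add1n ltnS; apply: prefix_weak_dyck_cat; rewrite ?expr_balanced //.
  exact: prefix_weak_dyck_strict (expr_balanced l k) (IHl k).
exact: prefix_weak_dyck_strict (expr_balanced r _) (IHr _).
Qed.

Lemma expr_suffix_unbalanced t k i : 0 < i < size (expr t k) ->
  ~~ balanced (drop i (expr t k)).
Proof.
move=> /expr_prefix_lt; move/eqP: (expr_balanced t k).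
rewrite -{1 2}(cat_take_drop i (expr t k)) /balanced !count_cat.
set a := count _ (take _ _); set b := count _ (take _ _).
by set c := count _ (drop _ _); set d := count _ (drop _ _); move=> E L; apply/eqP; lia.
Qed.

Lemma expr_last_leaf t k : exists body d,
  [/\ expr t k = body ++ X (k + internal t).+1 :: nseq d RP,
      forall x, X x \in body -> x <= k + internal t
    & 0 < internal t -> exists b0 c, body = rcons b0 c /\ c != LP].
Proof.
elim: t k => [|l IHl r IHr] k /=; first by exists [::], 0; rewrite addn0.
have [br [dr [Er Lr Pr]]] := IHr (k + (internal l).+1).
exists (LP :: expr l k ++ br), dr.+1; split.
- by rewrite Er -!catA /= -[[:: RP]]/(nseq 1 RP) -nseqD addn1 -addnA addSn -catA.
- move=> x; rewrite inE /= mem_cat => /orP[/mem_X_expr|/Lr]; lia.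
move=> _; clear IHl IHr; case: r Er Lr Pr => [|rl rr] Er _ Pr; last first.
  have [b0 [c [-> Hc]]] := Pr isT.
  by exists (LP :: expr l k ++ b0), c; rewrite -rcons_cat.
have -> : br = [::] by case: br {Pr} Er => // a [].
case: l {Er} => [|ll lr] /=; first by exists [:: LP], (X k.+1).
exists (LP :: LP :: expr ll k ++ expr lr (k + (internal ll).+1)), RP.
by rewrite cats0 -cats1 /= -!catA.
Qed.

Lemma match_lpE s q p0 : p0 < q -> nth RP s p0 = LP -> balanced (slice s p0 q) ->
  (forall p, p0 < p < q -> nth RP s p = LP -> ~~ balanced (slice s p q)) ->
  match_lp s q = p0.
Proof.
move=> hq hp hb hn; apply/eqP; rewrite eqn_leq; apply/andP; split.
  apply/bigmax_leqP => i /andP[/eqP hi hbi]; rewrite leqNgt; apply/negP => lt.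
  by have := hn i; rewrite lt ltn_ord hi hbi => /(_ isT erefl).
have := @leq_bigmax_cond _ (fun p : 'I_q => (nth RP s p == LP) && balanced (slice s p q))
   (fun p => nat_of_ord p) (Ordinal hq).
by rewrite /= hp eqxx hb; apply.
Qed.

Lemma nth_cat_size (T : Type) (x0 : T) s1 s2 j :
  nth x0 (s1 ++ s2) (size s1 + j) = nth x0 s2 j.
Proof. by rewrite nth_cat ltnNge leq_addr /= addKn. Qed.

Lemma drop_cat_size (T : Type) (s1 s2 : seq T) j : drop (size s1 + j) (s1 ++ s2) = drop j s2.
Proof. by rewrite addnC -drop_drop drop_size_cat. Qed.

Lemma match_lp_expr pre t k post : 0 < internal t ->
  match_lp (pre ++ expr t k ++ post) (size pre + (size (expr t k)).-1) = size pre.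
Proof.
case: t => // l r _; set e := expr _ k.
have se : 1 < size e by rewrite /e /= !size_cat /= !addnS.
apply: match_lpE; first lia.
- by rewrite -(addn0 (size pre)) nth_cat_size.
- rewrite /slice drop_size_cat // (_ : _.+1 = size e); last lia.
  by rewrite take_size_cat // expr_balanced.
move=> p /andP[h1 h2] _; rewrite (_ : p = size pre + (p - size pre)); last lia.
rewrite /slice drop_cat_size drop_cat (_ : p - size pre < size e); last lia.
rewrite take_size_cat; last by rewrite size_drop; lia.
apply: expr_suffix_unbalanced; rewrite -/e; lia.
Qed.

Lemma find_neq_RP_nseq d rest : nth LP rest 0 != RP ->
  find (fun t : tok => t != RP) (nseq d RP ++ rest) = d.
Proof.
by move=> h; elim: d => [|d /= ->] //; case: rest h => //= t rest ->.
Qed.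

(* x_(k + |l| + 1) is the last leaf of [l]; the run of ')' following it
   ends with the one closing [l], whose '(' stands just before x_(k+1). *)
Lemma name_at_last_leaf l k pre rest : (forall x, X x \in pre -> x <= k) ->
  nth LP rest 0 != RP ->
  name_at (pre ++ LP :: expr l k ++ rest) (k + internal l).+1 = k.+1.
Proof.
move=> Hpre Hrest; have npre x : k < x -> X x \notin pre.
  by move=> hx; apply/negP => /Hpre; rewrite leqNgt hx.
case: l => [|ll lr].
  rewrite /name_at /= addn0 index_cat (negbTE (npre _ (ltnSn k))) /= eqxx /= addn1 /=.
  by rewrite nth_cat ltnn subnn.
set l := Node ll lr; set i := (k + internal l).+1; set e := expr l k.
have [body [d [El Lb /(_ isT) [b0 [c [Eb Hc]]]]]] := expr_last_leaf l k.
have He : e = expr l k by []; clearbody e.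
set P := rcons pre LP.
have -> : pre ++ LP :: e ++ rest = P ++ e ++ rest by rewrite /P -cats1 -catA.
have Ee : e ++ rest = b0 ++ c :: X i :: nseq d RP ++ rest by rewrite He El Eb cat_rcons -catA.
have Hse : size e = size b0 + 2 + d by rewrite He El Eb size_cat size_rcons /= size_nseq; lia.
rewrite /name_at.
have -> : index (X i) (P ++ e ++ rest) = size P + (size b0).+1.
  rewrite index_cat (_ : (X i \in P) = false); last first.
    by rewrite /P mem_rcons inE (negbTE (npre _ _)) //; lia.
  rewrite He El Eb -catA index_cat (_ : (X i \in rcons b0 c) = false).
    by rewrite /= eqxx addn0 !size_rcons.
  by apply/negP; rewrite -Eb => /Lb; rewrite /i; lia.
rewrite addnS ltn0Sn succnK -(addn0 (size b0)) nth_cat_size Ee nth_cat_size.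
rewrite (negbTE Hc) /= addn0 -(addn2 (_ + _)) -addnA !drop_cat_size /= drop0.
rewrite find_neq_RP_nseq //.
rewrite -Ee (_ : (size P + size b0).+1 + d = size P + (size e).-1); last lia.
by rewrite He match_lp_expr // -addn1 drop_cat_size /l /= -!catA drop0 nth_find_X_expr.
Qed.

(** * The recursive name and the operations over and under *)

Fixpoint rname (t : tree) : seq nat :=
  match t with
  | Leaf => [::]
  | Node l r => rname l ++ 1 :: map (addn (internal l).+1) (rname r)
  end.

Lemma size_rname t : size (rname t) = internal t.
Proof. by elim: t => //= l IHl r IHr; rewrite size_cat /= size_map IHl IHr addnS. Qed.

Lemma name_at_expr t k pre post j : (forall x, X x \in pre -> x <= k) ->
  0 < j <= internal t -> name_at (pre ++ expr t k ++ post) (k + j) = k + nth 0 (rname t) j.-1.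
Proof.
elim: t k pre post j => [|l IHl r IHr] k pre post j Hpre /andP[j0 /= hj]; first lia.
set kr := k + (internal l).+1.
rewrite /= (_ : pre ++ _ = pre ++ LP :: expr l k ++ (expr r kr ++ RP :: post)); last first.
  by rewrite -!catA.
case: (ltngtP j (internal l).+1) => hja.
- rewrite -[pre ++ LP :: _]/(pre ++ [:: LP] ++ _) (catA pre) IHl; last by lia.
    by rewrite nth_cat size_rname (_ : j.-1 < internal l); last lia.
  by move=> x; rewrite mem_cat inE => /orP[/Hpre|/eqP].
- rewrite -[pre ++ LP :: _]/(pre ++ (LP :: expr l k) ++ _) (catA pre).
  rewrite (_ : k + j = kr + (j - (internal l).+1)); last lia.
  rewrite IHr; last by lia.
    rewrite nth_cat size_rname (_ : j.-1 < internal l = false); last lia.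
    rewrite (_ : j.-1 - internal l = (j - (internal l).+1).-1.+1) /=; last lia.
    by rewrite (nth_map 0) ?size_rname; lia.
  move=> x; rewrite !mem_cat inE => /or3P[/Hpre|/eqP //|/mem_X_expr]; lia.
- subst j; rewrite addnS name_at_last_leaf //; last by case: (r) {IHr}.
  by rewrite nth_cat size_rname ltnn subnn addn1.
Qed.

Lemma nameE t : name t = rname t.
Proof.
rewrite /name /cexpr -(mkseq_nth 0 (rname t)) size_rname /mkseq -[1]addn0 iotaDl -map_comp.
apply/eq_in_map => i; rewrite mem_iota /= => hi.
by have := @name_at_expr t 0 [::] [::] (1 + i); rewrite cats0; apply=> //; lia.
Qed.

Lemma rname_gt0 t : all (leq 1) (rname t).
Proof. by elim: t => //= l IHl r _; rewrite all_cat IHl /= all_map; apply/allP. Qed.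

Lemma internal_tover pi tau : internal (tover pi tau) = internal pi + internal tau.
Proof. by elim: tau => //= [|l -> r _]; rewrite ?addn0 ?addnS ?addnA. Qed.

Lemma internal_tunder pi tau : internal (tunder pi tau) = internal pi + internal tau.
Proof. by elim: pi => //= l _ r ->; rewrite addSn addnA. Qed.

Lemma rname_tover pi tau : rname (tover pi tau) = nover (rname pi) (rname tau).
Proof.
rewrite /nover; elim: tau => /= [|l -> r _]; first by rewrite cats0.
rewrite map_cat -catA /= -map_comp internal_tover size_rname.
congr (_ ++ _ ++ _ :: _); apply/eq_in_map => x /(allP (rname_gt0 r)) hx /=.
by rewrite /tri (_ : (_ + x == 1) = false); lia.
Qed.

Lemma rname_tunder pi tau : rname (tunder pi tau) = nunder (rname pi) (rname tau).
Proof.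
rewrite /nunder; elim: pi => /= [|l _ r ->]; first by rewrite (eq_map (addn0)) map_id.
rewrite map_cat -catA /= -map_comp size_cat /= size_map !size_rname.
by congr (_ ++ _ :: _ ++ _); apply/eq_map => x /=; lia.
Qed.

(* The entry 1 contributed by the root is the last 1 of the name. *)
Lemma index_1_rev_rname l r : index 1 (rev (rname (Node l r))) = internal r.
Proof.
rewrite /= rev_cat rev_cons -cats1 -catA index_cat mem_rev.
rewrite (_ : 1 \in map _ _ = false) /= ?eqxx ?size_rev ?size_map ?size_rname ?addn0 //.
by apply/negbTE/mapP => -[x /(allP (rname_gt0 r))]; lia.
Qed.

Lemma rname_inj : injective rname.
Proof.
elim=> [|l IHl r IHr] [|l' r'] //=; [by case: (rname l') | by case: (rname l) |].
move=> E; have Er : internal r = internal r'.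
  by rewrite -(index_1_rev_rname l) -(index_1_rev_rname l') /= E.
have El : internal l = internal l'.
  by have := congr1 size E; rewrite !size_cat /= !size_map !size_rname Er; lia.
move/eqP: E; rewrite eqseq_cat ?size_rname // => /andP[/eqP/IHl -> /=].
by rewrite eqseq_cons eqxx => /eqP/(inj_map (@addnI _))/IHr ->.
Qed.

Lemma hatNE n v : hatN n v <-> exists t, internal t = n /\ rname t = v.
Proof. by split=> -[t [h1 h2]]; exists t; rewrite nameE in h2 *. Qed.

Lemma nth_rname0 t : 0 < internal t -> nth 0 (rname t) 0 = 1.
Proof.
elim: t => //= l IHl r _ _; rewrite nth_cat size_rname.
by case: (posnP (internal l)) => [->|/IHl].
Qed.

(* The first leaf of a right subtree that is not a leaf gives an entry v_i = i. *)
Lemma rname_fixpoint t : rname t != nseq (internal t) 1 ->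
  exists2 i, 0 < i < internal t & nth 0 (rname t) i = i.+1.
Proof.
elim: t => [|l IHl [|rl rr] _] //=.
  rewrite addn0 -[1 :: nseq _ _]/(nseq (internal l).+1 1) -(addn1 (internal l)) nseqD.
  rewrite eqseq_cat ?size_rname ?size_nseq // eqxx andbT => /IHl [i hi hn].
  by exists i; [lia | rewrite nth_cat size_rname (_ : i < internal l) //; lia].
move=> _; exists (internal l).+1; first lia.
rewrite nth_cat size_rname ltnNge leqnSn /= subSn // subnn /=.
rewrite -[rname rl ++ _]/(rname (Node rl rr)) (nth_map 0) ?size_rname //.
by rewrite nth_rname0 // addn1.
Qed.

Lemma name_tover pi tau : name (tover pi tau) = nover (name pi) (name tau).
Proof. by rewrite !nameE rname_tover. Qed.

Lemma name_tunder pi tau : name (tunder pi tau) = nunder (name pi) (name tau).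
Proof. by rewrite !nameE rname_tunder. Qed.

Lemma hatN_nover n m v w : hatN n v -> hatN m w -> hatN (n + m) (nover v w).
Proof.
move=> /hatNE[pi [<- <-]] /hatNE[tau [<- <-]]; apply/hatNE.
by exists (tover pi tau); rewrite internal_tover rname_tover.
Qed.

Lemma hatN_nunder n m v w : hatN n v -> hatN m w -> hatN (n + m) (nunder v w).
Proof.
move=> /hatNE[pi [<- <-]] /hatNE[tau [<- <-]]; apply/hatNE.
by exists (tunder pi tau); rewrite internal_tunder rname_tunder.
Qed.

Lemma hatN_gt0 n v : hatN n v -> all (leq 1) v.
Proof. by move=> /hatNE[t [_ <-]]; apply: rname_gt0. Qed.

Lemma size_hatN n v : hatN n v -> size v = n.
Proof. by move=> /hatNE[t [<- <-]]; apply: size_rname. Qed.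

Lemma name_inj : injective name.
Proof. by move=> t t'; rewrite !nameE => /rname_inj. Qed.

Lemma hatNposP u : hatNpos u <-> exists2 t, 0 < internal t & name t = u.
Proof.
split=> [[n [n0 /hatNE[t [ht <-]]]]|[t t0 <-]]; first by exists t; rewrite ?ht ?nameE.
by exists (internal t); split=> //; apply/hatNE; exists t; rewrite nameE.
Qed.

Lemma hatNpos_gt0 u : hatNpos u -> all (leq 1) u.
Proof. by case=> n [_ /hatN_gt0]. Qed.

Lemma hatNpos_size_gt0 u : hatNpos u -> 0 < size u.
Proof. by case=> n [n0 /size_hatN ->]. Qed.

Lemma hatNpos_nover u v : hatNpos u -> hatNpos v -> hatNpos (nover u v).
Proof.
move=> [n [n0 hu]] [m [_ hv]].
by exists (n + m); split; [rewrite ltn_addr | apply: hatN_nover].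
Qed.

Lemma hatNpos_nunder u v : hatNpos u -> hatNpos v -> hatNpos (nunder u v).
Proof.
move=> [n [n0 hu]] [m [_ hv]].
by exists (n + m); split; [rewrite ltn_addr | apply: hatN_nunder].
Qed.

Lemma nover_assoc u v w : all (leq 1) w -> nover (nover u v) w = nover u (nover v w).
Proof.
move=> hw; rewrite /nover map_cat -catA -map_comp size_cat size_map.
congr (_ ++ _ ++ _); apply/eq_in_map => a /(allP hw) ha /=; rewrite /tri.
by case: eqP => // /eqP a1; rewrite ifF; [lia | apply/eqP; lia].
Qed.

Lemma nunder_assoc u v w : nunder (nunder u v) w = nunder u (nunder v w).
Proof.
rewrite /nunder map_cat -catA -map_comp size_cat size_map.
by congr (_ ++ _ ++ _); apply/eq_map => a /=; lia.
Qed.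

Lemma nunder_noverA u v w : 0 < size v -> all (leq 1) w ->
  nunder (nover u v) w = nover u (nunder v w).
Proof.
move=> hv hw; rewrite /nover /nunder map_cat -catA -map_comp size_cat size_map.
congr (_ ++ _ ++ _); apply/eq_in_map => a /(allP hw) ha /=.
by rewrite /tri ifF; [lia | apply/eqP; lia].
Qed.

(** * The Möbius function *)

Lemma mem_box y z : (z \in box y) = all2 (fun a b => 0 < a <= b) z y.
Proof.
elim: y z => [|a y IH] [|b z] //=; first by apply/allpairsPdep => -[? [? []]].
apply/allpairsPdep/idP => [[x [w [hx hw [-> ->]]]]|/andP[hb hz]].
  by rewrite -IH hw andbT -mem_iota.
by exists b, z; rewrite mem_iota IH; split=> //; lia.
Qed.

Lemma uniq_box y : uniq (box y).
Proof.
elim: y => //= a y IH; apply: allpairs_uniq_dep => //; first exact: iota_uniq.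
by move=> [x1 z1] [x2 z2] _ _ /= [-> ->].
Qed.

Lemma size_box y z : z \in box y -> size z = size y.
Proof. by rewrite mem_box all2E => /andP[/eqP]. Qed.

Lemma sumn_box_lt y z : z \in box y -> z != y -> sumn z < sumn y.
Proof.
rewrite mem_box; elim: z y => [|a z IH] [|b y] //= /andP[hab hzy].
have : sumn z <= sumn y.
  by elim: z y {IH} hzy => [|c z IHz] [|d y] //= /andP[? /IHz]; lia.
by rewrite eqseq_cons negb_and => + /orP[|/(IH _ hzy)]; lia.
Qed.

Lemma box_gt0 y z : z \in box y -> all (leq 1) z.
Proof. by rewrite mem_box; elim: z y => [|a z IH] [|b y] //= /andP[/andP[-> _] /IH]. Qed.

Lemma box_self y : all (leq 1) y -> y \in box y.
Proof. by rewrite mem_box; elim: y => //= a y IH /andP[-> /IH ->]; rewrite leqnn. Qed.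

Lemma leqv_ones y : all (leq 1) y -> leqv (nseq (size y) 1) y.
Proof. by rewrite /leqv size_nseq eqxx; elim: y => //= a y IH /andP[-> /IH]. Qed.

Local Open Scope ring_scope.

(* On names, M v = mprod 0 v (see [M_mprod]). *)
Definition mfactor (j a : nat) : int :=
  if a == 1%N then 1 else if a == j then -1 else 0.

Fixpoint mprod (k : nat) (y : seq nat) : int :=
  if y is a :: y' then mfactor k.+1 a * mprod k.+1 y' else 1.

Lemma mprod_cat k v w : mprod k (v ++ w) = mprod k v * mprod (k + size v) w.
Proof. by elim: v k => /= [|a v IH] k; rewrite ?mul1r ?addn0 // IH mulrA addnS. Qed.

Lemma mprod_ones k n : mprod k (nseq n 1%N) = 1.
Proof. by elim: n k => //= n IH k; rewrite IH mulr1. Qed.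

Lemma sum_mfactor j : (1 < j)%N -> \sum_(b <- iota 1 j) mfactor j b = 0.
Proof.
case: j => [|[|j]] // _; rewrite -[j.+2]addn1 iotaD big_cat big_seq1 /= big_cons.
rewrite big1_seq => [|b]; last first.
  by rewrite mem_iota /mfactor => hb; rewrite !ifF //; apply/eqP; lia.
by rewrite /mfactor eqxx addnC eqxx ifF ?addr0 ?subrr //; apply/eqP; lia.
Qed.

Lemma sum_mprod_box_cons k a y : \sum_(z <- box (a :: y)) mprod k z =
  (\sum_(b <- iota 1 a) mfactor k.+1 b) * \sum_(z <- box y) mprod k.+1 z.
Proof. by rewrite big_allpairs_dep mulr_suml; apply: eq_bigr => b _; rewrite mulr_sumr. Qed.

Lemma sum_mprod_box_eq0 k y i : (i < size y)%N -> (0 < k + i)%N ->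
  nth 0%N y i = (k + i).+1 -> \sum_(z <- box y) mprod k z = 0.
Proof.
elim: y k i => //= a y IH k [|i] /= hi hk ha; rewrite sum_mprod_box_cons.
  by rewrite ha addn0 sum_mfactor ?mul0r //; lia.
by rewrite (IH k.+1 i) ?mulr0 // addSnnS.
Qed.

(* An entry 1, resp. v_i = i, is produced by grafting the one-vertex tree
   over, resp. under, the tree named by the preceding entries. *)
Lemma mprod_neq0_hatN z : mprod 0 z != 0 -> hatN (size z) z.
Proof.
elim/last_ind: z => [|z a IH]; first by move=> _; apply/hatNE; exists Leaf.
rewrite -cats1 mprod_cat /= mulr1 mulf_eq0 negb_or => /andP[/IH/hatNE[t [ht hz]]].
rewrite /mfactor size_cat addn1 add0n; case: ifP => [/eqP -> _|_].
  apply/hatNE; exists (tover t (Node Leaf Leaf)).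
  by rewrite internal_tover rname_tover ht hz /= addn1.
case: ifP => [/eqP -> _|]; last by rewrite eqxx.
apply/hatNE; exists (tunder t (Node Leaf Leaf)).
by rewrite internal_tunder rname_tunder ht hz /nunder /= add1n addn1.
Qed.

Lemma sum_mprod_hatN y : hatN (size y) y -> y != nseq (size y) 1%N ->
  \sum_(z <- box y | `[< hatN (size y) z >]) mprod 0 z = 0.
Proof.
move=> /hatNE[t [_ hy]] ny1.
have [|i hi hyi] := @rname_fixpoint t; first by rewrite hy -(size_rname t) hy.
have box0 : \sum_(z <- box y) mprod 0 z = 0.
  by apply: (@sum_mprod_box_eq0 0 y i); rewrite -?hy ?size_rname //; lia.
rewrite big_mkcond -[RHS]box0.
apply: eq_big_seq => z /size_box hz; case: asboolP => // nhz.
by apply/eqP; rewrite eq_sym; apply: contraT => /mprod_neq0_hatN; rewrite hz.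
Qed.

Lemma mob_aux_mprod f y : hatN (size y) y -> (sumn y < f)%N ->
  mob_aux f (nseq (size y) 1%N) y = mprod 0 y.
Proof.
elim: f y => // f IH y hy hf /=.
have ypos : all (leq 1) y by have /hatNE[t [_ <-]] := hy; apply: rname_gt0.
case: eqP => [<-|/eqP ny1]; first by rewrite mprod_ones.
have := sum_mprod_hatN hy; rewrite eq_sym => /(_ ny1).
rewrite big_mkcond (bigD1_seq y) ?box_self ?uniq_box //= -big_mkcondr.
case: asboolP => // _; move/eqP; rewrite addr_eq0 => /eqP ->.
rewrite leqv_ones //; congr (- _); rewrite big_seq_cond [RHS]big_seq_cond.
apply: eq_big => [z|z /andP[zy /andP[/andP[_ nzy] /asboolP hz]]].
  by case zy: (z \in box y); rewrite //= -(size_box zy) leqv_ones ?(box_gt0 zy).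
rewrite -(size_box zy) IH //; first by rewrite (size_box zy).
by have := sumn_box_lt zy nzy; lia.
Qed.

Lemma M_mprod n y : hatN n y -> M y = mprod 0 y.
Proof.
move=> hy; have /hatNE[t [ht hyt]] := hy.
have sy : size y = n by rewrite -hyt size_rname.
by apply: mob_aux_mprod; rewrite ?sy.
Qed.

Lemma mprod_tri n k w : all (leq 1) w -> mprod (n + k) (map (tri n) w) = mprod k w.
Proof.
elim: w k => //= a w IH k /andP[ha hw]; rewrite -addnS IH //; congr (_ * _).
rewrite /mfactor /tri; case: a ha => [|[|a]] //= _.
by rewrite (_ : (a.+2 + n == n + k.+1) = (a.+2 == k.+1)) //; apply/eqP/eqP; lia.
Qed.

Lemma mprod_shift n k w : (0 < n)%N -> all (leq 1) w ->
  mprod (n + k) (map (addn^~ n) w) =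
  if w == iota k.+1 (size w) then (-1) ^+ size w else 0.
Proof.
move=> hn; elim: w k => //= a w IH k /andP[ha hw]; rewrite -addnS IH // eqseq_cons.
rewrite /mfactor ifF; last by apply/eqP; lia.
rewrite (_ : (a + n == n + k.+1) = (a == k.+1)); last by apply/eqP/eqP; lia.
by case: (a == k.+1); case: ifP; rewrite ?mul0r ?mulr0 ?exprS.
Qed.

Local Open Scope ring_scope.

Lemma M_nover n m v w : hatN n v -> hatN m w -> M (nover v w) = M v * M w.
Proof.
move=> hv hw; rewrite (M_mprod (hatN_nover hv hw)) (M_mprod hv) (M_mprod hw).
by rewrite /nover mprod_cat add0n -[X in mprod X (map _ _)]addn0 mprod_tri ?(hatN_gt0 hw).
Qed.

Lemma M_nunder n m v w : (0 < n)%N -> hatN n v -> hatN m w ->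
  M (nunder v w) = if w == iota 1 m then (-1) ^+ m * M v else 0.
Proof.
move=> n0 hv hw; rewrite (M_mprod (hatN_nunder hv hw)) (M_mprod hv).
rewrite /nunder mprod_cat add0n -[X in mprod X (map _ _)]addn0.
rewrite mprod_shift ?(hatN_gt0 hw) ?(size_hatN hv) //.
by rewrite (size_hatN hw); case: ifP; rewrite ?mulr0 // mulrC.
Qed.

(** * Formal linear combinations *)

Section FormalSums.
Variables (T U : eqType) (K : fieldType).
Implicit Types (a b c : seq (T * K)) (op : T -> T -> T).

Lemma coefE c x : coef c x = \sum_(p <- c) p.2 * (p.1 == x)%:R.
Proof.
by rewrite /coef big_mkcond; apply: eq_bigr => p _; case: eqP; rewrite ?mulr1 ?mulr0.
Qed.

Lemma big_bilin op a b (F : T * K -> K) :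
  \sum_(r <- bilin op a b) F r = \sum_(p <- a) \sum_(q <- b) F (op p.1 q.1, p.2 * q.2).
Proof. exact: big_allpairs_dep. Qed.

Lemma big_linmap (f : T -> U) a (F : U * K -> K) :
  \sum_(r <- linmap f a) F r = \sum_(p <- a) F (f p.1, p.2).
Proof. exact: big_map. Qed.

Lemma sum_coef c (s : seq T) (g : T -> K) : uniq s -> {subset map fst c <= s} ->
  \sum_(p <- c) p.2 * g p.1 = \sum_(x <- s) coef c x * g x.
Proof.
move=> us sub; under [RHS]eq_bigr do rewrite coefE mulr_suml.
rewrite exchange_big /=; apply: eq_big_seq => p hp.
rewrite (bigD1_seq p.1) ?sub ?map_f //= eqxx mulr1 big1 ?addr0 // => x /negbTE hx.
by rewrite eq_sym hx mulr0 mul0r.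
Qed.

Lemma eq_sum_coef c c' (g : T -> K) : coef c =1 coef c' ->
  \sum_(p <- c) p.2 * g p.1 = \sum_(p <- c') p.2 * g p.1.
Proof.
move=> E; set s := undup (map fst (c ++ c')).
rewrite (@sum_coef c s) ?(@sum_coef c' s) ?undup_uniq //.
- by apply: eq_bigr => x _; rewrite E.
- by move=> y /mapP[p hp ->]; rewrite mem_undup map_f // mem_cat hp orbT.
by move=> y /mapP[p hp ->]; rewrite mem_undup map_f // mem_cat hp.
Qed.

Lemma mem_bilin_closed (P : T -> Prop) op a b :
  (forall x y, P x -> P y -> P (op x y)) ->
  (forall p, p \in a -> P p.1) -> (forall p, p \in b -> P p.1) ->
  forall p, p \in bilin op a b -> P p.1.
Proof.
by move=> Pop Pa Pb p /allpairsPdep[x [y [hx hy ->]]]; apply: Pop; [apply: Pa | apply: Pb].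
Qed.

Lemma coef_bilin op a b x :
  coef (bilin op a b) x = \sum_(p <- a) p.2 * \sum_(q <- b) q.2 * (op p.1 q.1 == x)%:R.
Proof.
rewrite coefE big_bilin; apply: eq_bigr => p _; rewrite mulr_sumr.
by apply: eq_bigr => q _ /=; rewrite mulrA.
Qed.

Lemma eq_coef_bilin op a a' b b' :
  coef a =1 coef a' -> coef b =1 coef b' -> coef (bilin op a b) =1 coef (bilin op a' b').
Proof.
move=> Ea Eb x; rewrite !coef_bilin.
under eq_bigr do rewrite (eq_sum_coef (fun y => (op _ y == x)%:R) Eb).
exact: (eq_sum_coef (fun z => \sum_(q <- b') q.2 * (op z q.1 == x)%:R) Ea).
Qed.

Lemma coef_bilinA (op1 op2 op3 op4 : T -> T -> T) a b c :
  (forall p q w, p \in a -> q \in b -> w \in c ->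
     op1 (op2 p.1 q.1) w.1 = op3 p.1 (op4 q.1 w.1)) ->
  coef (bilin op1 (bilin op2 a b) c) =1 coef (bilin op3 a (bilin op4 b c)).
Proof.
move=> H x; rewrite !coefE !big_bilin; apply: eq_big_seq => p hp; rewrite big_bilin.
by apply: eq_big_seq => q hq; apply: eq_big_seq => w hw /=; rewrite H // mulrA.
Qed.

End FormalSums.

Section LinearMaps.
Variables (T U : eqType) (K : fieldType) (f : T -> U).
Implicit Types (a : seq (T * K)).

Lemma coef_linmap a y : coef (linmap f a) y = \sum_(p <- a) p.2 * (f p.1 == y)%:R.
Proof. by rewrite coefE big_linmap. Qed.

Lemma eq_coef_linmap a a' : coef a =1 coef a' -> coef (linmap f a) =1 coef (linmap f a').
Proof. by move=> E y; rewrite !coef_linmap (eq_sum_coef (fun x => (f x == y)%:R) E). Qed.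

Lemma coef_linmap_inj a x : injective f -> coef (linmap f a) (f x) = coef a x.
Proof. by move=> finj; rewrite coef_linmap coefE; under eq_bigr do rewrite (inj_eq finj). Qed.

Lemma linmap_bilin (op : T -> T -> T) (op' : U -> U -> U) a b :
  (forall x y, f (op x y) = op' (f x) (f y)) ->
  linmap f (bilin op a b) = bilin op' (linmap f a) (linmap f b).
Proof.
move=> fop; rewrite /linmap /bilin allpairs_mapl allpairs_mapr map_allpairs.
by apply: eq_allpairs => p q /=; rewrite fop.
Qed.

Lemma linmap_onto (P : pred T) (c : seq (U * K)) :
  (forall p, p \in c -> exists2 x, P x & f x = p.1) ->
  exists2 a, (forall p, p \in a -> P p.1) & linmap f a = c.
Proof.
elim: c => [|[y k] c IH] hc; first by exists [::].
have [x Px fx] := hc _ (mem_head _ _).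
have [|a Pa <-] := IH; first by move=> p hp; apply: hc; rewrite inE hp orbT.
by exists ((x, k) :: a); [move=> p; rewrite inE => /predU1P[-> | /Pa] | rewrite /= fx].
Qed.

End LinearMaps.

Local Close Scope ring_scope.

Unset Implicit Arguments.
Theorem mainTheorem6 (K : fieldType) (HK : [pchar K]%R =i pred0) :
  (* (i) and (iii) *)
  (forall (n m : nat) (v w : seq nat), 0 < n -> 0 < m -> hatN n v -> hatN m w ->
     [/\ hatN (n + m) (nover v w), hatN (n + m) (nunder v w),
         M (nover v w) = (M v * M w)%R
       & M (nunder v w) = (if w == iota 1 m then ((-1) ^+ m * M v)%R else 0%R)])
  /\
  (* (i), trees *)
  (forall pi tau : tree, 0 < internal pi -> 0 < internal tau ->
     name (tover pi tau) = nover (name pi) (name tau)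
     /\ name (tunder pi tau) = nunder (name pi) (name tau))
  /\
  (* (ii), on the basis *)
  (forall u v w : seq nat, hatNpos u -> hatNpos v -> hatNpos w ->
     [/\ nover (nover u v) w = nover u (nover v w),
         nunder (nunder u v) w = nunder u (nunder v w)
       & nunder (nover u v) w = nover u (nunder v w)])
  /\
  (* (ii), the bilinear extension is a well-defined associative L-algebra
     on (+)_{n>=1} K \hat N^n *)
  (forall a a' b b' c : seq (seq nat * K),
     (forall p, p \in a -> hatNpos p.1) -> (forall p, p \in a' -> hatNpos p.1) ->
     (forall p, p \in b -> hatNpos p.1) -> (forall p, p \in b' -> hatNpos p.1) ->
     (forall p, p \in c -> hatNpos p.1) ->
     ((forall p, p \in bilin nover a b -> hatNpos p.1)
      /\ (forall p, p \in bilin nunder a b -> hatNpos p.1)) /\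
     [/\ (coef a =1 coef a' -> coef b =1 coef b' ->
            coef (bilin nover a b) =1 coef (bilin nover a' b')
            /\ coef (bilin nunder a b) =1 coef (bilin nunder a' b')),
         coef (bilin nover (bilin nover a b) c) =1 coef (bilin nover a (bilin nover b c)),
         coef (bilin nunder (bilin nunder a b) c) =1 coef (bilin nunder a (bilin nunder b c))
       & coef (bilin nunder (bilin nover a b) c) =1 coef (bilin nover a (bilin nunder b c))])
  /\
  (* (ii), name extended linearly is an isomorphism of associative L-algebras
     (+)_{n>=1} K Y_n --> (+)_{n>=1} K \hat N^n *)
  (forall a a' b : seq (tree * K),
     (forall p, p \in a -> 0 < internal p.1) -> (forall p, p \in a' -> 0 < internal p.1) ->
     (forall p, p \in b -> 0 < internal p.1) ->
     [/\ (forall p, p \in linmap name a -> hatNpos p.1),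
         (coef a =1 coef a' <-> coef (linmap name a) =1 coef (linmap name a')),
         coef (linmap name (bilin tover a b))
           =1 coef (bilin nover (linmap name a) (linmap name b))
       & coef (linmap name (bilin tunder a b))
           =1 coef (bilin nunder (linmap name a) (linmap name b))])
  /\
  (forall c : seq (seq nat * K), (forall p, p \in c -> hatNpos p.1) ->
     exists a : seq (tree * K), (forall p, p \in a -> 0 < internal p.1)
       /\ coef (linmap name a) =1 coef c).
Proof.
split.
  move=> n m v w n0 _ hv hw.
  by split; [exact: hatN_nover | exact: hatN_nunder | exact: M_nover hv hw
    | exact: M_nunder n0 hv hw].
split; first by move=> pi tau _ _; rewrite name_tover name_tunder.
split.
  move=> u v w _ /hatNpos_size_gt0 hv /hatNpos_gt0 hw.
  by split; [exact: nover_assoc | exact: nunder_assoc | exact: nunder_noverA].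
split.
  move=> a a' b b' c ha _ hb _ hc; split.
    by split; apply: mem_bilin_closed => //; [apply: hatNpos_nover | apply: hatNpos_nunder].
  split.
  - by move=> Ea Eb; split; apply: eq_coef_bilin.
  - by apply: coef_bilinA => p q w _ _ /hc/hatNpos_gt0; apply: nover_assoc.
  - by apply: coef_bilinA => *; apply: nunder_assoc.
  - apply: coef_bilinA => p q w _ /hb/hatNpos_size_gt0 hq /hc/hatNpos_gt0.
    exact: nunder_noverA.
split.
  move=> a a' b ha _ _; split.
  - by move=> p /mapP[[t k] /ha ht ->]; apply/hatNposP; exists t.
  - split; first exact: eq_coef_linmap.
    by move=> E t; rewrite -!(coef_linmap_inj _ _ name_inj) E.
  - by rewrite (linmap_bilin _ _ name_tover).
  - by rewrite (linmap_bilin _ _ name_tunder).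
move=> c hc; have [|a ha <-] := @linmap_onto _ _ K name (fun t => 0 < internal t) c.
  by move=> p /hc/hatNposP.
by exists a.
Qed.
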